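(* Let $q,r,\mu,\nu$ be positive integers. For all $z\in\mathbb{C}$: \begin{align*} \mathcal{A}(z)&=(\widetilde U_\mu(z)\otimes I_q)\,\mathcal{A}(0)\,(\widetilde W_\nu(z)\otimes I_r),\\ \mathcal{M}(z)&=(I_\mu\otimes\widetilde U_q(z))\,\mathcal{M}(0)\,(I_\nu\otimes\widetilde W_r(z)),\\ \mathcal{M}(z)&=(\widetilde U_\mu(-z)\otimes U_q(z))\,\mathcal{A}(z)\,(\widetilde W_\nu(-z)\otimes W_r(z)),\\ \mathcal{N}(z)&=(U_\mu(z)^{-1}\otimes U_q(z))\,\mathcal{A}(z)\,(W_\nu(z)^{-1}\otimes W_r(z)),\\ \mathcal{N}(z)&=(I_\mu\otimes\widetilde U_q(z))\,\mathcal{N}(0)\,(I_\nu\otimes\widetilde W_r(z)). \end{align*}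
   Context: Matrix indices start at $0$. $u(z)=(1,\dots,z^{q-1})^\top$, $w(z)=(1,\dots,z^{r-1})$, $M(z)=u(z)w(z)$; $\mathcal{M}(z)$ (resp. $\mathcal{N}(z)$) is the $\mu q\times\nu r$ block matrix with $(i,j)$ block $M^{(i+j)}(z)$ (resp. $\frac{1}{i!j!}M^{(i+j)}(z)$), $i<\mu$, $j<\nu$. For $k\ge0$, $A^k(z)\in\mathbb{C}^{q\times r}$ has entries $\frac{k!}{a!b!(k-a-b)!}z^{k-a-b}$ (zero if $a+b>k$), and $\mathcal{A}(z)$ is the $\mu q\times\nu r$ block matrix with $(i,j)$ block $A^{i+j}(z)$. For any $n\ge1$: $U_n(z)\in\mathbb{C}^{n\times n}$ is the matrix $(u_n(z),u_n'(z),\dots,u_n^{(n-1)}(z))$ with $u_n(z)=(1,z,\dots,z^{n-1})^\top$; $W_n(z)=U_n(z)^\top$ is the matrix whose $i$-th row is $w_n^{(i)}(z)$ with $w_n(z)=(1,z,\dots,z^{n-1})$; $\widetilde U_n(z)$ has entries $\binom{i}{j}z^{i-j}$ ($0$ for $j>i$), i.e. its $j$-th column is $u_n^{(j)}(z)/j!$; $\widetilde W_n(z)=\widetilde U_n(z)^\top$, i.e. its $i$-th row is $w_n^{(i)}(z)/i!$. *)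

From HB Require Import structures.
From mathcomp Require Import all_boot all_order all_algebra.
From mathcomp Require Import reals.
From mathcomp Require Export complex mxtens.
Set Implicit Arguments. Unset Strict Implicit. Unset Printing Implicit Defensive.
Import Order.TTheory GRing.Theory Num.Theory.
Local Open Scope ring_scope.

Section Defs.
Variable C : fieldType.

Definition mxderiv {m n} (P : 'M[{poly C}]_(m, n)) (k : nat) (z : C) : 'M[C]_(m, n) :=
  \matrix_(a, b) ((P a b)^`(k)).[z].

Definition upoly (n : nat) : 'cV[{poly C}]_n := \col_(a < n) 'X^a.
Definition wpoly (n : nat) : 'rV[{poly C}]_n := \row_(b < n) 'X^b.
Definition Mpoly (q r : nat) : 'M[{poly C}]_(q, r) := upoly q *m wpoly r.

Definition Mder (q r k : nat) (z : C) : 'M[C]_(q, r) := mxderiv (Mpoly q r) k z.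

(* block matrix of size (mu*q) x (nu*r) whose (i,j) block is B i j;
   the row index k corresponds to (k %/ q, k %% q) (Kronecker convention) *)
Definition blockmx (mu nu q r : nat) (B : nat -> nat -> 'M[C]_(q, r))
  : 'M[C]_(mu * q, nu * r) :=
  \matrix_(k, l) B (mxtens_unindex k).1 (mxtens_unindex l).1
                   (mxtens_unindex k).2 (mxtens_unindex l).2.

Definition calM (mu nu q r : nat) (z : C) : 'M[C]_(mu * q, nu * r) :=
  blockmx mu nu (fun i j => Mder q r (i + j) z).

Definition calN (mu nu q r : nat) (z : C) : 'M[C]_(mu * q, nu * r) :=
  blockmx mu nu (fun i j => ((i`!)%:R^-1 * (j`!)%:R^-1) *: Mder q r (i + j) z).

Definition Amx (q r k : nat) (z : C) : 'M[C]_(q, r) :=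
  \matrix_(a < q, b < r)
    (if (a + b <= k)%N then
       (k`!)%:R / (a`! * b`! * (k - a - b)`!)%:R * z ^+ (k - a - b)
     else 0).

Definition calA (mu nu q r : nat) (z : C) : 'M[C]_(mu * q, nu * r) :=
  blockmx mu nu (fun i j => Amx q r (i + j) z).

Definition Umx (n : nat) (z : C) : 'M[C]_n :=
  \matrix_(i < n, j < n) (('X^i : {poly C})^`(j)).[z].
Definition Wmx (n : nat) (z : C) : 'M[C]_n := (Umx n z)^T.

Definition tUmx (n : nat) (z : C) : 'M[C]_n :=
  \matrix_(i < n, j < n) (if (j <= i)%N then ('C(i, j))%:R * z ^+ (i - j) else 0).
Definition tWmx (n : nat) (z : C) : 'M[C]_n := (tUmx n z)^T.

End Defs.

From HB Require Import structures.
From mathcomp Require Import all_boot all_order all_algebra.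
From mathcomp Require Import reals complex mxtens ring.
Import Order.TTheory GRing.Theory Num.Theory.
Local Open Scope ring_scope.
Local Open Scope complex_scope.
Set Implicit Arguments. Unset Strict Implicit. Unset Printing Implicit Defensive.

(* Entry (a, b) of A^k(z) is (X^k)^(a+b)(z) / (a! b!) and entry (a, b) of
   M^(k)(z) is (X^(a+b))^(k)(z). Row i of tU_n(w) lists the coefficients of
   (X + w)^i, so summing against tU(w) on both sides turns X^i X^j into
   (X + w)^(i+j), which moves the evaluation point by w: this gives the shift
   laws for A and M as well as tU(z) tU(w) = tU(z + w). Moreover U_n = tU_n D
   and W_n = D tW_n with D = diag(i!), and (X^m)^(n)(0) is symmetric in m and
   n, so conjugating A(0) by I (x) D yields M(0). *)

Section TensorBlocks.
Variable R : comPzRingType.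

Definition mxtens_block m n p s (X : 'M[R]_(m * p, n * s)) i j : 'M[R]_(p, s) :=
  \matrix_(a, b) X (mxtens_index (i, a)) (mxtens_index (j, b)).

Lemma mxtens_blockP m n p s (X Y : 'M[R]_(m * p, n * s)) :
  (forall i j, mxtens_block X i j = mxtens_block Y i j) -> X = Y.
Proof.
move=> eqXY; apply/matrixP => k l.
case: (mxtens_indexP k) => i a; case: (mxtens_indexP l) => j b.
by have /matrixP/(_ a b) := eqXY i j; rewrite !mxE.
Qed.

Lemma sum_mxtens_index (V : nmodType) m n (F : 'I_(m * n) -> V) :
  \sum_(k < m * n) F k = \sum_(i < m) \sum_(a < n) F (mxtens_index (i, a)).
Proof.
rewrite pair_big (reindex (@mxtens_index m n)) /=; last first.
  by exists (@mxtens_unindex m n) => x _; rewrite (mxtens_indexK, mxtens_unindexK).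
by apply: eq_bigr => -[].
Qed.

Lemma mxtens_block_mul m m' n n' p p' s s'
    (P : 'M[R]_(m, m')) (Q : 'M[R]_(p, p')) (X : 'M[R]_(m' * p', n' * s'))
    (P' : 'M[R]_(n', n)) (Q' : 'M[R]_(s', s)) i j :
  mxtens_block ((P *t Q) *m X *m (P' *t Q')) i j
  = \sum_(i' < m') \sum_(j' < n')
      (P i i' * P' j' j) *: (Q *m mxtens_block X i' j' *m Q').
Proof.
apply/matrixP => a b; rewrite !mxE summxE sum_mxtens_index.
under eq_bigr do under eq_bigr do
  rewrite mxE sum_mxtens_index tensmxE big_distrl /=.
under [RHS]eq_bigr do rewrite summxE; under [RHS]eq_bigr do
  under eq_bigr do rewrite !mxE big_distrr /=.
under eq_bigr do rewrite exchange_big /=.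
rewrite exchange_big /=; apply: eq_bigr => i' _; apply: eq_bigr => j' _.
apply: eq_bigr => b' _; rewrite mxE big_distrl big_distrl big_distrr /=.
by apply: eq_bigr => a' _; rewrite tensmxE !mxE; ring.
Qed.

Lemma mxtens_block_mul_diag m n p p' s s' (d : 'rV[R]_m) (d' : 'rV[R]_n)
    (Q : 'M[R]_(p, p')) (X : 'M[R]_(m * p', n * s')) (Q' : 'M[R]_(s', s)) i j :
  mxtens_block ((diag_mx d *t Q) *m X *m (diag_mx d' *t Q')) i j
  = (d 0 i * d' 0 j) *: (Q *m mxtens_block X i j *m Q').
Proof.
rewrite mxtens_block_mul (bigD1 i) //= [X in _ + X]big1 => [|i' ne_i'i].
  rewrite addr0 (bigD1 j) //= [X in _ + X]big1 => [|j' ne_j'j].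
    by rewrite addr0 !mxE !eqxx !mulr1n.
  by rewrite [diag_mx d' _ _]mxE (negbTE ne_j'j) mulr0n mulr0 scale0r.
by apply: big1 => j' _; rewrite mxE eq_sym (negbTE ne_i'i) mulr0n !mul0r scale0r.
Qed.

Lemma mxtens_block_mul1 m n p p' s s' (Q : 'M[R]_(p, p'))
    (X : 'M[R]_(m * p', n * s')) (Q' : 'M[R]_(s', s)) i j :
  mxtens_block ((1%:M *t Q) *m X *m (1%:M *t Q')) i j
  = Q *m mxtens_block X i j *m Q'.
Proof. by rewrite -!diag_const_mx mxtens_block_mul_diag !mxE mulr1 scale1r. Qed.

End TensorBlocks.

Lemma mxtens_block_blockmx (C : fieldType) mu nu q r
    (B : nat -> nat -> 'M[C]_(q, r)) i j :
  mxtens_block (blockmx mu nu B) i j = B i j.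
Proof. by apply/matrixP => a b; rewrite !mxE !mxtens_indexK. Qed.

Lemma mulmx3E (R : comPzRingType) m m' n' n (P : 'M[R]_(m, m'))
    (B : 'M[R]_(m', n')) (P' : 'M[R]_(n', n)) a b :
  (P *m B *m P') a b = \sum_(a' < m') \sum_(b' < n') P a a' * P' b' b * B a' b'.
Proof.
rewrite mxE; under eq_bigr do rewrite mxE big_distrl /=.
rewrite exchange_big /=; apply: eq_bigr => a' _; apply: eq_bigr => b' _.
by ring.
Qed.

Section Shift.
Variable C : fieldType.
Implicit Types (z w : C) (p : {poly C}).

Lemma sum_tUmx_Xn n w (a : 'I_n) :
  \sum_(a' < n) tUmx n w a a' *: 'X^a' = ('X + w%:P) ^+ a.
Proof.
rewrite addrC exprDn.
rewrite (big_ord_widen n (fun i => w%:P ^+ (a - i) * 'X^i *+ 'C(a, i))) //.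
rewrite [RHS]big_mkcond /=; apply: eq_bigr => i _.
rewrite mxE ltnS; case: leqP => _; last by rewrite scale0r.
by rewrite -polyC_exp mul_polyC scalerMnl mulr_natl.
Qed.

Lemma horner_derivn_comp_shift p d z w :
  ((p \Po ('X + w%:P))^`(d)).[z] = (p^`(d)).[z + w].
Proof.
have shift_derivn e : (p \Po ('X + w%:P))^`(e) = p^`(e) \Po ('X + w%:P).
  elim: e => [|e IHe]; first by rewrite !derivn0.
  by rewrite !derivnS IHe deriv_comp derivD derivX derivC addr0 mulr1.
by rewrite shift_derivn horner_comp hornerD hornerX hornerC.
Qed.

Lemma sum_tUmx2_derivn n1 n2 w (i : 'I_n1) (j : 'I_n2) d z :
  \sum_(i' < n1) \sum_(j' < n2)
     tUmx n1 w i i' * tUmx n2 w j j' * (('X^i' * 'X^j')^`(d)).[z]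
  = (('X^(i + j))^`(d)).[z + w].
Proof.
rewrite -horner_derivn_comp_shift comp_Xn_poly exprD -!sum_tUmx_Xn mulr_suml.
rewrite linear_sum horner_sum; apply: eq_bigr => i' _.
rewrite mulr_sumr linear_sum horner_sum; apply: eq_bigr => j' _.
by rewrite -scalerAl -scalerAr !linearZ /= !hornerZ mulrA.
Qed.

Lemma coef_sum_Xn n (c : 'I_n -> C) (k : 'I_n) :
  (\sum_(l < n) c l *: 'X^l)`_k = c k.
Proof.
rewrite coef_sum (bigD1 k) //= coefZ coefXn eqxx mulr1 big1 ?addr0 // => l ne_lk.
by rewrite coefZ coefXn eq_sym (inj_eq val_inj) (negbTE ne_lk) mulr0.
Qed.

Lemma tUmxD n z w : tUmx n z *m tUmx n w = tUmx n (z + w).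
Proof.
apply/matrixP => i k.
rewrite -[LHS](coef_sum_Xn (fun l => (tUmx n z *m tUmx n w) i l)).
rewrite -[RHS](coef_sum_Xn (fun l => tUmx n (z + w) i l)) sum_tUmx_Xn.
apply: (congr1 (fun p : {poly C} => p`_k)).
under eq_bigr do rewrite mxE scaler_suml.
rewrite exchange_big /=.
under eq_bigr do under eq_bigr do rewrite -scalerA.
under eq_bigr do rewrite -scaler_sumr sum_tUmx_Xn.
have -> : ('X + (z + w)%:P) ^+ i = ('X + z%:P) ^+ i \Po ('X + w%:P).
  rewrite rmorphXn /= comp_polyD comp_polyX comp_polyC polyCD addrA.
  by congr (_ ^+ _); ring.
rewrite -[('X + z%:P) ^+ i]sum_tUmx_Xn linear_sum /=.
by apply: eq_bigr => j _; rewrite linearZ /= comp_Xn_poly.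
Qed.

Lemma tUmx0 n : tUmx n (0 : C) = 1%:M.
Proof.
apply/matrixP => i j; rewrite !mxE expr0n subn_eq0.
case: (ltngtP i j) => [lt_ij | lt_ji | /val_inj->].
- by rewrite -val_eqE /= ltn_eqF.
- by rewrite mulr0 -val_eqE /= gtn_eqF.
- by rewrite binn eqxx mulr1.
Qed.

Lemma MderE q r k z (a : 'I_q) (b : 'I_r) :
  Mder q r k z a b = (('X^(a + b))^`(k)).[z].
Proof. by rewrite !mxE big_ord1 !mxE exprD. Qed.

Lemma Mder_shift q r k z w :
  Mder q r k (z + w) = tUmx q w *m Mder q r k z *m tWmx r w.
Proof.
apply/matrixP => a b; rewrite MderE mulmx3E -sum_tUmx2_derivn.
apply: eq_bigr => a' _; apply: eq_bigr => b' _.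
by rewrite MderE exprD [tWmx _ _ _ _]mxE.
Qed.

End Shift.

Section Factorials.
Variable C : numFieldType.
Implicit Types (z : C).

Lemma natr_fact_neq0 n : n`!%:R != 0 :> C.
Proof. by rewrite pnatr_eq0 -lt0n fact_gt0. Qed.

Definition factmx n : 'M[C]_n := diag_mx (\row_(i < n) i`!%:R).
Definition invfactmx n : 'M[C]_n := diag_mx (\row_(i < n) i`!%:R^-1).

Lemma factmxK n : factmx n *m invfactmx n = 1%:M.
Proof.
apply/matrixP => i j; rewrite mul_diag_mx !mxE.
by case: eqP => [->|_]; rewrite ?mulr0n ?mulr0 // !mulr1n mulfV ?natr_fact_neq0.
Qed.

Lemma Umx_tUmx n z : Umx n z = tUmx n z *m factmx n.
Proof.
apply/matrixP => i j; rewrite mul_mx_diag !mxE derivnXn hornerMn hornerXn.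
case: leqP => [le_ji | lt_ij]; last by rewrite ffact_small // mulr0n mul0r.
by rewrite -bin_ffact -mulr_natr natrM; ring.
Qed.

Lemma Wmx_tWmx n z : Wmx n z = factmx n *m tWmx n z.
Proof. by rewrite /Wmx Umx_tUmx trmx_mul tr_diag_mx. Qed.

Lemma invmx_Umx n z : invmx (Umx n z) = invfactmx n *m tUmx n (- z).
Proof.
have UK : Umx n z *m (invfactmx n *m tUmx n (- z)) = 1%:M.
  by rewrite Umx_tUmx -mulmxA (mulmxA (factmx n)) factmxK mul1mx tUmxD subrr tUmx0.
have [U_unit _] := mulmx1_unit UK.
by rewrite -[invmx _]mulmx1 -UK mulmxA mulVmx // mul1mx.
Qed.

Lemma invmx_Wmx n z : invmx (Wmx n z) = tWmx n (- z) *m invfactmx n.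
Proof. by rewrite /Wmx -trmx_inv invmx_Umx trmx_mul tr_diag_mx. Qed.

Lemma Amx_derivnE q r k z (a : 'I_q) (b : 'I_r) :
  Amx q r k z a b = (('X^k)^`(a + b)).[z] / (a`! * b`!)%:R.
Proof.
rewrite mxE derivnXn hornerMn hornerXn.
case: leqP => [le_abk | lt_kab]; last by rewrite ffact_small // mulr0n mul0r.
rewrite -(ffact_fact le_abk) subnDA !natrM -mulr_natr.
by field; rewrite !natr_fact_neq0.
Qed.

Lemma horner0_derivnXnC m n : (('X^m)^`(n)).[0] = (('X^n)^`(m)).[0] :> C.
Proof.
rewrite !derivnXn !hornerMn !hornerXn.
case: (ltngtP m n) => [lt_mn | lt_nm | -> //].
- by rewrite ffact_small // mulr0n expr0n subn_eq0 leqNgt lt_mn mul0rn.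
- by rewrite [n ^_ m]ffact_small // mulr0n expr0n subn_eq0 leqNgt lt_nm mul0rn.
Qed.

Lemma Amx0_Mder0 q r k :
  factmx q *m Amx q r k (0 : C) *m factmx r = Mder q r k 0.
Proof.
apply/matrixP => a b; rewrite mul_mx_diag mul_diag_mx mxE [X in X * _]mxE.
rewrite Amx_derivnE MderE horner0_derivnXnC !mxE natrM.
by field; rewrite !natr_fact_neq0.
Qed.

End Factorials.

Section BlockIdentities.
Variables (C : numFieldType) (mu nu q r : nat).
Implicit Types (z w : C).

Lemma calA_shift z w :
  calA mu nu q r (z + w)
  = (tUmx mu w *t 1%:M) *m calA mu nu q r z *m (tWmx nu w *t 1%:M).
Proof.
apply: mxtens_blockP => i j; rewrite mxtens_block_mul !mxtens_block_blockmx.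
apply/matrixP => a b; rewrite (Amx_derivnE (C:=C)) -sum_tUmx2_derivn.
rewrite mulr_suml summxE; apply: eq_bigr => i' _.
rewrite mulr_suml summxE; apply: eq_bigr => j' _.
rewrite mul1mx mulmx1 mxtens_block_blockmx [RHS]mxE (Amx_derivnE (C:=C)).
by rewrite exprD [tWmx _ _ _ _]mxE mulrA.
Qed.

Lemma calM_shift z :
  calM mu nu q r z
  = (1%:M *t tUmx q z) *m calM mu nu q r 0 *m (1%:M *t tWmx r z).
Proof.
apply: mxtens_blockP => i j.
by rewrite mxtens_block_mul1 !mxtens_block_blockmx -Mder_shift add0r.
Qed.

Lemma calM0_calA0 :
  (1%:M *t factmx C q) *m calA mu nu q r 0 *m (1%:M *t factmx C r)
  = calM mu nu q r 0.
Proof.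
apply: mxtens_blockP => i j.
by rewrite mxtens_block_mul1 !mxtens_block_blockmx Amx0_Mder0.
Qed.

Lemma calN_calM z :
  calN mu nu q r z
  = (invfactmx C mu *t 1%:M) *m calM mu nu q r z *m (invfactmx C nu *t 1%:M).
Proof.
apply: mxtens_blockP => i j.
by rewrite mxtens_block_mul_diag mul1mx mulmx1 !mxtens_block_blockmx !mxE.
Qed.

Lemma calM_calA z :
  calM mu nu q r z
  = (tUmx mu (- z) *t Umx q z) *m calA mu nu q r z *m (tWmx nu (- z) *t Wmx r z).
Proof.
have calA0 := calA_shift z (- z); rewrite subrr in calA0.
have tens1mx_mul n (A B : 'M[C]_n) k :
    (1%:M : 'M_k) *t (A *m B) = (1%:M *t A) *m (1%:M *t B).
  by rewrite tensmx_mul mul1mx.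
rewrite [_ *t Umx _ _]tensmx_decl [_ *t Wmx _ _]tensmx_decr.
rewrite calM_shift -calM0_calA0 calA0.
by rewrite Umx_tUmx Wmx_tWmx !tens1mx_mul !mulmxA.
Qed.

Lemma calN_calA z :
  calN mu nu q r z
  = (invmx (Umx mu z) *t Umx q z) *m calA mu nu q r z
      *m (invmx (Wmx nu z) *t Wmx r z).
Proof.
rewrite invmx_Umx invmx_Wmx calN_calM calM_calA.
have -> : (invfactmx C mu *m tUmx mu (- z)) *t Umx q z
    = (invfactmx C mu *t 1%:M) *m (tUmx mu (- z) *t Umx q z).
  by rewrite tensmx_mul mul1mx.
have -> : (tWmx nu (- z) *m invfactmx C nu) *t Wmx r z
    = (tWmx nu (- z) *t Wmx r z) *m (invfactmx C nu *t 1%:M).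
  by rewrite tensmx_mul mulmx1.
by rewrite !mulmxA.
Qed.

Lemma calN_shift z :
  calN mu nu q r z
  = (1%:M *t tUmx q z) *m calN mu nu q r 0 *m (1%:M *t tWmx r z).
Proof.
have tensmx_comm n m (A : 'M[C]_n) (B : 'M[C]_m) :
    (A *t 1%:M) *m (1%:M *t B) = (1%:M *t B) *m (A *t 1%:M).
  by rewrite -tensmx_decl -tensmx_decr.
by rewrite !calN_calM calM_shift !mulmxA tensmx_comm -!mulmxA tensmx_comm.
Qed.

End BlockIdentities.

Theorem proposition3p5 (R : realType) (q r mu nu : nat)
  (hq : (0 < q)%N) (hr : (0 < r)%N) (hmu : (0 < mu)%N) (hnu : (0 < nu)%N)
  (z : R[i]) :
  [/\ calA mu nu q r z
        = (tensmx (tUmx mu z) (1%:M : 'M_q)) *m calA mu nu q r 0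
            *m (tensmx (tWmx nu z) (1%:M : 'M_r)),
      calM mu nu q r z
        = (tensmx (1%:M : 'M_mu) (tUmx q z)) *m calM mu nu q r 0
            *m (tensmx (1%:M : 'M_nu) (tWmx r z)),
      calM mu nu q r z
        = (tensmx (tUmx mu (- z)) (Umx q z)) *m calA mu nu q r z
            *m (tensmx (tWmx nu (- z)) (Wmx r z)),
      calN mu nu q r z
        = (tensmx (invmx (Umx mu z)) (Umx q z)) *m calA mu nu q r z
            *m (tensmx (invmx (Wmx nu z)) (Wmx r z))
    & calN mu nu q r z
        = (tensmx (1%:M : 'M_mu) (tUmx q z)) *m calN mu nu q r 0
            *m (tensmx (1%:M : 'M_nu) (tWmx r z))].
Proof.
split; [| exact: calM_shift | exact: calM_calA | exact: calN_calA
        | exact: calN_shift].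
by have := calA_shift mu nu q r 0 z; rewrite add0r.
Qed.
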